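(* Let $G$ be a subcubic graph (maximum degree at most $3$), and let $D$ be a maximum dissociation set of $G$ which, among all maximum dissociation sets of $G$, maximizes the number of isolated vertices of $G[D]$. Then the graph $G[V(G)\setminus D]$ has maximum degree at most $1$.
   Context: All graphs are finite, simple and undirected. A set $D$ of vertices of $G$ is a dissociation set if the induced subgraph $G[D]$ has maximum degree at most $1$; the dissociation number $\mathrm{diss}(G)$ is the maximum order of a dissociation set, and a maximum dissociation set is one of order $\mathrm{diss}(G)$. *)

From mathcomp Require Import all_boot.
Set Implicit Arguments. Unset Strict Implicit. Unset Printing Implicit Defensive.

Definition simple_graph (T : finType) (e : rel T) : Prop :=
  symmetric e /\ irreflexive e.

Definition nbhd (T : finType) (e : rel T) (v : T) : {set T} := [set u | e v u].

Definition ideg (T : finType) (e : rel T) (S : {set T}) (v : T) : nat :=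
  #|nbhd e v :&: S|.

Definition subcubic (T : finType) (e : rel T) : Prop :=
  forall v : T, #|nbhd e v| <= 3.

Definition maxdeg_le1 (T : finType) (e : rel T) (S : {set T}) : Prop :=
  forall v, v \in S -> ideg e S v <= 1.

Definition dissociation_set (T : finType) (e : rel T) (D : {set T}) : Prop :=
  maxdeg_le1 e D.

Definition max_dissociation_set (T : finType) (e : rel T) (D : {set T}) : Prop :=
  dissociation_set e D /\
  forall D' : {set T}, dissociation_set e D' -> #|D'| <= #|D|.

Definition n_isolated (T : finType) (e : rel T) (D : {set T}) : nat :=
  #|[set v in D | ideg e D v == 0]|.

(* Let v be a vertex outside D with two neighbours outside D. As G is
   subcubic, v has at most one neighbour x in D. If x does not exist or is
   isolated in G[D], then D + v is a larger dissociation set. Otherwise x has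
   a (unique) neighbour y in D, and D - x + v is a maximum dissociation set in
   which v, y and every isolated vertex of G[D] are isolated: it has more
   isolated vertices than D. *)
From mathcomp Require Import all_boot zify.

Set Implicit Arguments.
Unset Strict Implicit.
Unset Printing Implicit Defensive.

Lemma subset_set1_card_le1 (T : finType) (A : {set T}) (x : T) :
  x \in A -> #|A| <= 1 -> A \subset [set x].
Proof.
by move=> xA /card_le1_eqP A1; apply/subsetP => z zA; rewrite inE (A1 z x).
Qed.

Section Dissociation.

Variables (T : finType) (e : rel T).
Hypotheses (esym : symmetric e) (eirr : irreflexive e).

Lemma subcubic_ideg_le1 (D : {set T}) v :
  subcubic e -> 2 <= ideg e (~: D) v -> ideg e D v <= 1.
Proof.
move=> sub deg2; have := sub v; rewrite -(cardsID D) setDE.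
by rewrite /ideg in deg2 *; lia.
Qed.

Lemma dissociation_setU1 (D : {set T}) v :
  dissociation_set e D -> ideg e D v <= 1 ->
  (forall u, u \in nbhd e v :&: D -> ideg e D u = 0) ->
  dissociation_set e (v |: D).
Proof.
move=> dD degv isoN z; rewrite in_setU1 => /orP [/eqP -> | zD].
  apply: leq_trans degv; apply/subset_leq_card/subsetP => u; rewrite !inE.
  by case/andP=> evu /orP [/eqP uv | ->]; [rewrite uv eirr in evu | rewrite evu].
have [ezv | nezv] := boolP (e z v).
  have z0 : nbhd e z :&: D = set0.
    by apply/eqP; rewrite -cards_eq0 -/(ideg e D z) (isoN z) // !inE esym ezv.
  rewrite -(cards1 v); apply/subset_leq_card/subsetP => u; rewrite !inE.
  case/andP=> ezu /orP [// | uD].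
  have : u \in nbhd e z :&: D by rewrite !inE ezu uD.
  by rewrite z0 inE.
apply: leq_trans (dD z zD); apply/subset_leq_card/subsetP => u; rewrite !inE.
by case/andP=> ezu /orP [/eqP uv | ->]; [rewrite -uv ezu in nezv | rewrite ezu].
Qed.

Section Swap.

Variables (D : {set T}) (v x : T).
Hypothesis NvD : nbhd e v :&: D \subset [set x].

Let D' := v |: (D :\ x).

(* No vertex of D - x is adjacent to v, since x was v's only neighbour in D. *)
Lemma nbhd_swap_sub z :
  z \in D' -> nbhd e z :&: D' \subset (nbhd e z :&: D) :\ x.
Proof.
move=> zD'; apply/subsetP => u; rewrite !inE => /andP [ezu].
case/orP => [/eqP uv | /andP [-> ->]]; last by rewrite ezu.
move: zD' ezu; rewrite uv !inE => /orP [/eqP -> | /andP [zx zD] ezv].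
  by rewrite eirr.
have : z \in nbhd e v :&: D by rewrite !inE esym ezv.
by move/(subsetP NvD); rewrite inE (negbTE zx).
Qed.

Lemma ideg_swap_eq0 z :
  z \in D' -> nbhd e z :&: D \subset [set x] -> ideg e D' z = 0.
Proof.
move=> zD' Nz; apply/eqP; rewrite -leqn0.
apply: leq_trans (subset_leq_card (nbhd_swap_sub zD')) _.
by rewrite leqn0 cards_eq0 -subset0 -(setDv [set x]) setSD.
Qed.

Lemma dissociation_set_swap : dissociation_set e D -> dissociation_set e D'.
Proof.
move=> dD z zD'; have := zD'; rewrite !inE => /orP [/eqP zv | /andP [_ zD]].
  by rewrite (ideg_swap_eq0 zD') // zv.
apply: leq_trans (subset_leq_card (nbhd_swap_sub zD')) _.
exact: leq_trans (subset_leq_card (subsetDl _ _)) (dD z zD).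
Qed.

Hypotheses (xD : x \in D) (vnD : v \notin D).

Lemma card_swap : #|D'| = #|D|.
Proof.
by rewrite cardsU1 (cardsD1 x D) xD !inE (negbTE vnD) andbF add1n.
Qed.

Lemma n_isolated_swap :
  dissociation_set e D -> ideg e D x != 0 -> n_isolated e D < n_isolated e D'.
Proof.
move=> dD xnz; have := xnz; rewrite cards_eq0 => /set0Pn [y].
rewrite !inE => /andP [exy yD].
set I := [set w in D | ideg e D w == 0].
have yI : y \notin I.
  by rewrite inE yD /ideg cards_eq0; apply/set0Pn; exists x; rewrite !inE esym exy.
have vyI : v \notin y |: I.
  by apply: contra vnD; rewrite !inE => /orP [/eqP -> | /andP []].
have isoD' : v |: (y |: I) \subset [set w in D' | ideg e D' w == 0].
  apply/subsetP => w; rewrite 2!in_setU1 => /or3P [/eqP -> | /eqP -> | wI].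
  - have vD' : v \in D' by rewrite setU11.
    by rewrite inE vD' (ideg_swap_eq0 vD').
  - have yx : y != x by apply: contraTneq exy => ->; rewrite eirr.
    have yD' : y \in D' by rewrite !inE yx yD orbT.
    rewrite inE yD' (ideg_swap_eq0 yD') //; apply: subset_set1_card_le1; last exact: dD.
    by rewrite !inE esym exy.
  - case/setIdP: wI => wD /eqP/cards0_eq w0.
    have wx : w != x by apply: contraNneq xnz => <-; rewrite /ideg w0 cards0.
    have wD' : w \in D' by rewrite !inE wx wD orbT.
    by rewrite inE wD' (ideg_swap_eq0 wD') // w0 sub0set.
rewrite /n_isolated -/I; apply: leq_trans (subset_leq_card isoD').
by rewrite cardsU1 vyI cardsU1 yI.
Qed.

End Swap.

End Dissociation.

Theorem mainTheorem4 (T : finType) (e : rel T) (D : {set T}) :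
  simple_graph e ->
  subcubic e ->
  max_dissociation_set e D ->
  (forall D' : {set T}, max_dissociation_set e D' ->
     n_isolated e D' <= n_isolated e D) ->
  maxdeg_le1 e (~: D).
Proof.
move=> [esym eirr] sub [dD maxD] isoD v; rewrite inE => vnD.
rewrite leqNgt; apply/negP => /(subcubic_ideg_le1 sub) degv.
have [/existsP [x /andP [xN xnz]] | /existsPn noN] :=
  boolP [exists x, (x \in nbhd e v :&: D) && (ideg e D x != 0)].
- have NvD := subset_set1_card_le1 xN degv.
  have xD : x \in D by case/setIP: xN.
  have maxD' : max_dissociation_set e (v |: (D :\ x)).
    split; first exact: dissociation_set_swap.
    by move=> D2 /maxD; rewrite card_swap.
  by have := leq_trans (n_isolated_swap esym eirr NvD xD vnD dD xnz) (isoD _ maxD');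
    rewrite ltnn.
- have dDv : dissociation_set e (v |: D).
    apply: dissociation_setU1 => // u uN; apply/eqP.
    by have := noN u; rewrite uN /= negbK.
  by have := maxD _ dDv; rewrite cardsU1 vnD add1n ltnn.
Qed.
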